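(* For all integers $n\geq 1$, $$qq(n)+\sum_{j\geq1}(-1)^j\left(qq(n-2j(3j-1))+qq(n-2j(3j+1))\right)=\begin{cases}1,&\text{if $n$ is a triangular number},\\0,&\text{otherwise,}\end{cases}$$ i.e. $qq(n)-qq(n-4)-qq(n-8)+qq(n-20)+qq(n-28)-qq(n-48)-qq(n-60)+\cdots$ equals $1$ if $n$ is triangular and $0$ otherwise.
   Context: $qq(n)$ denotes the number of partitions of $n$ into distinct odd parts, with $qq(0)=1$ and $qq(m)=0$ for $m<0$. A triangular number is an integer of the form $k(k+1)/2$ with $k\ge0$. *)

From mathcomp Require Import all_boot all_order all_algebra.
Set Implicit Arguments. Unset Strict Implicit. Unset Printing Implicit Defensive.
Import Order.TTheory GRing.Theory Num.Theory.

(* qq n = number of partitions of n into distinct odd parts, i.e. the number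
   of finite sets A of (positive) odd integers with sum n.  Every part is <= n,
   so A is a subset of {0,...,n}; 0 is even hence never a part.  qq 0 = 1. *)
Definition qq (n : nat) : nat :=
  #|[set A : {set 'I_n.+1} |
      [forall i in A, odd (nat_of_ord i)] && ((\sum_(i in A) nat_of_ord i) == n)]|.

Definition qqz (m : int) : int :=
  match m with
  | Posz k => (qq k)%:Z
  | Negz _ => 0%R
  end.

Definition triangular (n : nat) : Prop := exists k : nat, n = (k * k.+1) %/ 2.

From mathcomp Require Import all_boot all_order all_algebra.
From mathcomp Require Import ring zify.
Set Implicit Arguments.
Unset Strict Implicit.
Unset Printing Implicit Defensive.
Import Order.TTheory GRing.Theory Num.Theory.
Local Open Scope ring_scope.

(* The generating function of qq is (-q;q^2)_oo, and the identity is the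
   coefficient of q^n in
     (-q;q^2)_oo (q^4;q^4)_oo = sum_(k >= 0) q^(k(k+1)/2),
   with (q^4;q^4)_oo expanded by Euler's pentagonal number theorem.  Gauss'
   triangular number identity (p = q^4, a = q^3, w = q) and the pentagonal
   theorem (p = q^12, a = -q^8, w = -q^4) are both truncations of the finite
   Jacobi triple product (a w = p)
     prod_(k < n) (1 + a p^k)(1 + w p^k)
       = sum_(-n <= j <= n) [2n, n + j]_p a^j p^(j(j-1)/2),
   (read w^(-j) for a^j when j < 0), because
   [m, k]_q (q;q)_m = 1 mod q^(min(k, m - k) + 1).  So all identities are
   proved for polynomials compared modulo X^(n+1). *)

Lemma binS2 j : 'C(j.+1, 2) = ('C(j, 2) + j)%N.
Proof. by rewrite binS bin1. Qed.

Lemma bin2_mul2 j : ('C(j, 2) * 2 = j * (j - 1))%N.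
Proof.
elim: j => [|j IHj] //; rewrite binS2 mulnDl IHj subn1.
by case: j {IHj} => [|j] //=; rewrite subn1 /=; ring.
Qed.

Lemma bin2_odd_double j : 'C((2 * j).+1, 2) = (3 * j + 4 * 'C(j, 2))%N.
Proof.
elim: j => // j IHj; rewrite (_ : (2 * j.+1).+1 = (2 * j).+3)%N; last by lia.
by rewrite (binS2 (2 * j).+2) (binS2 (2 * j).+1) IHj binS2; lia.
Qed.

Lemma bin2_even_double j : 'C(2 * j, 2) = (j + 4 * 'C(j, 2))%N.
Proof. by have := bin2_odd_double j; rewrite binS2; lia. Qed.

Lemma bin2S_inj : injective (fun k => 'C(k.+1, 2)).
Proof.
move=> k k' /= E; have := bin2_mul2 k.+1.
by rewrite E bin2_mul2 !subn1 /=; nia.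
Qed.

Lemma nat_split_at n i : (exists j, i = n + j)%N \/ (exists m, n = i + m.+1)%N.
Proof.
by case: (leqP n i) => H; [left; exists (i - n)%N | right; exists (n - i.+1)%N]; lia.
Qed.

Lemma sumr_center (V : zmodType) n (F : nat -> V) :
  \sum_(i < (2 * n).+1) F i
  = F n + \sum_(1 <= j < n.+1) (F (n + j)%N + F (n - j)%N).
Proof.
rewrite -(big_mkord xpredT F) (@big_cat_nat _ _ _ n) //=; last by lia.
rewrite (@big_ltn _ _ _ n) //; last by lia.
have -> : \sum_(n.+1 <= i < (2 * n).+1) F i = \sum_(1 <= j < n.+1) F (n + j)%N.
  rewrite -(add1n n) big_addn (_ : (2 * n).+1 - n = 1 + n)%N; last by lia.
  by apply: eq_bigr => j _; rewrite addnC.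
have -> : \sum_(0 <= i < n) F i = \sum_(1 <= j < n.+1) F (n - j)%N.
  by rewrite big_nat_rev big_add1 /=; apply: eq_bigr => j _; rewrite add0n.
by rewrite big_split /= addrCA (addrC (\sum_(1 <= j < n.+1) F (n - j)%N)).
Qed.

Section GaussianBinomial.
Variables (R : comPzRingType) (p : R).

Fixpoint qbinom (m k : nat) : R :=
  match m, k with
  | _, 0 => 1
  | 0, _.+1 => 0
  | m'.+1, k'.+1 => qbinom m' k' + p ^+ k'.+1 * qbinom m' k'.+1
  end.

Definition qpoch (m : nat) : R := \prod_(0 <= l < m) (1 - p ^+ l.+1).

Lemma qbinom0 m : qbinom m 0 = 1. Proof. by case: m. Qed.

Lemma qbinomS m k : qbinom m.+1 k.+1 = qbinom m k + p ^+ k.+1 * qbinom m k.+1.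
Proof. by []. Qed.

Lemma qbinom_small m k : (m < k)%N -> qbinom m k = 0.
Proof.
elim: m k => [|m IHm] [|k] //= ltmk.
by rewrite !IHm ?mulr0 ?addr0 // ltnW.
Qed.

Lemma qbinomS_dual m k :
  qbinom m.+1 k.+1 = p ^+ (m - k) * qbinom m k + qbinom m k.+1.
Proof.
elim: m k => [|m IHm] [|k]; rewrite ?qbinom0.
- by rewrite /= !(mulr0, addr0, mulr1, expr0).
- by rewrite /= !mulr0 !addr0.
- rewrite [LHS]qbinomS [in LHS]IHm [in RHS]qbinomS !qbinom0 !subn0 !exprS.
  ring.
rewrite [LHS]qbinomS [in LHS]IHm [in LHS]IHm subSS.
rewrite [in RHS]qbinomS [in RHS]qbinomS.
have [ltkm | lemk] := ltnP k m; last by rewrite (@qbinom_small m k.+1) //; ring.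
have Epow : p ^+ k.+2 * p ^+ (m - k.+1) = p ^+ (m - k) * p ^+ k.+1.
  by rewrite -!exprD; congr (_ ^+ _); lia.
by rewrite !mulrDr mulrA Epow; ring.
Qed.

Lemma qbinomS_ratio m k :
  qbinom m k.+1 * (1 - p ^+ k.+1) = qbinom m k * (1 - p ^+ (m - k)).
Proof.
have E : qbinom m k + p ^+ k.+1 * qbinom m k.+1
       = p ^+ (m - k) * qbinom m k + qbinom m k.+1.
  by rewrite -qbinomS qbinomS_dual.
apply/eqP; rewrite -subr_eq0 -(subrr (qbinom m k + p ^+ k.+1 * qbinom m k.+1)).
by rewrite {1}E; apply/eqP; ring.
Qed.

Lemma qpochS m : qpoch m.+1 = qpoch m * (1 - p ^+ m.+1).
Proof. by rewrite /qpoch big_nat_recr. Qed.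

Lemma qbinom_qpoch m k :
  (k <= m)%N -> qbinom m k * qpoch k * qpoch (m - k) = qpoch m.
Proof.
elim: k => [|k IHk] lekm; first by rewrite qbinom0 subn0 /qpoch big_nil !mul1r.
rewrite -IHk ?(ltnW lekm) // -(@subnSK k m) // !qpochS (@subnSK k m) //.
transitivity (qbinom m k.+1 * (1 - p ^+ k.+1) * qpoch k * qpoch (m - k.+1)).
  by ring.
by rewrite qbinomS_ratio; ring.
Qed.

Lemma qbinomSS m i : qbinom m.+2 i.+2 =
  p ^+ (m - i) * qbinom m i + (1 + p ^+ m.+1) * qbinom m i.+1
  + p ^+ i.+2 * qbinom m i.+2.
Proof.
rewrite qbinomS !qbinomS_dual.
have [ltim | leim] := ltnP i m; last by rewrite (@qbinom_small m i.+1) //; ring.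
have Epow : p ^+ i.+2 * p ^+ (m - i.+1) = p ^+ m.+1.
  by rewrite -exprD; congr (_ ^+ _); lia.
by rewrite mulrDr mulrA Epow; ring.
Qed.

Lemma qbinomS1 m : qbinom m.+2 1 = 1 + p ^+ m.+1 + p * qbinom m 1.
Proof.
by rewrite qbinomS qbinom0 qbinomS_dual subn0 qbinom0 mulr1 expr1 exprS; ring.
Qed.

End GaussianBinomial.

Section FiniteJacobiTripleProduct.
Variables (R : comNzRingType) (a w p : R).
Hypothesis awp : a * w = p.

Definition jtp_term (n i : nat) : R :=
  if (n <= i)%N then a ^+ (i - n) * p ^+ 'C(i - n, 2)
  else w ^+ (n - i) * p ^+ 'C(n - i, 2).

Lemma jtp_term_right n j : jtp_term n (n + j) = a ^+ j * p ^+ 'C(j, 2).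
Proof. by rewrite /jtp_term leq_addr addKn. Qed.

Lemma jtp_term_left i m : jtp_term (i + m.+1) i = w ^+ m.+1 * p ^+ 'C(m.+1, 2).
Proof.
rewrite /jtp_term ifF; last by apply/negbTE; rewrite -ltnNge; lia.
by rewrite addKn.
Qed.

Lemma jtp_termSS n i : jtp_term n.+1 i.+1 = jtp_term n i.
Proof. by rewrite /jtp_term ltnS !subSS. Qed.

Lemma jtp_term_mulw n i : w * p ^+ n * jtp_term n i = p ^+ i * jtp_term n.+1 i.
Proof.
case: (nat_split_at n i) => [[[|j] ->]|[m ->]].
- rewrite addn0 /jtp_term leqnn ltnn subnn subSnn /= expr0 !mulr1 expr1.
  exact: mulrC.
- rewrite jtp_term_right -addSnnS jtp_term_right binS2 !exprD !exprS -awp.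
  ring.
rewrite jtp_term_left -addnS jtp_term_left (binS2 m.+1) !exprD !exprS -awp.
ring.
Qed.

Lemma jtp_term_mula n i : (i <= 2 * n)%N ->
  a * p ^+ n * jtp_term n i = p ^+ (2 * n - i) * jtp_term n.+1 i.+2.
Proof.
case: (nat_split_at n i) => [[j ->]|[[|m] ->]] le_i2n.
- rewrite -addnS -addSn !jtp_term_right binS2.
  have -> : (2 * n - (n + j) = n - j)%N by lia.
  rewrite -[in LHS](@subnK j n); last by lia.
  rewrite !exprD !exprS; ring.
- rewrite addn1 /jtp_term leqnn subnn ltnn subSnn.
  have -> : (2 * i.+1 - i = i.+2)%N by lia.
  by rewrite /= !exprS !expr0 !mulr1 -awp; ring.
rewrite jtp_term_left.
have -> : ((i + m.+2).+1 = i.+2 + m.+1)%N by lia.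
have -> : (2 * (i + m.+2) - i = i + m.+2 + m.+2)%N by lia.
rewrite jtp_term_left (binS2 m.+1) !exprD !exprS -awp; ring.
Qed.

(* Homogenizing in X makes the i-th summand the coefficient of X^i of
   jtp_poly n; the identity is its value at X = 1. *)
Definition jtp_factor (k : nat) : {poly R} :=
  (1 + (a * p ^+ k)%:P * 'X) * ('X + (w * p ^+ k)%:P).

Definition jtp_poly (n : nat) : {poly R} := \prod_(0 <= k < n) jtp_factor k.

Lemma jtp_factorE k : jtp_factor k =
  (w * p ^+ k)%:P + (1 + p ^+ (2 * k).+1)%:P * 'X + (a * p ^+ k)%:P * 'X^2.
Proof.
have -> : p ^+ (2 * k).+1 = (a * p ^+ k) * (w * p ^+ k).
  by rewrite exprS -awp mul2n -addnn exprD; ring.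
by rewrite /jtp_factor polyCD polyCM polyC1; ring.
Qed.

Lemma coefM_jtp_factor (P : {poly R}) k i :
  (P * jtp_factor k)`_i = P`_i * (w * p ^+ k)
    + (if i is i'.+1 then P`_i' * (1 + p ^+ (2 * k).+1) else 0)
    + (if i is i'.+2 then P`_i' * (a * p ^+ k) else 0).
Proof.
rewrite jtp_factorE !mulrDr !coefD coefMC !mulrA !coefMX !coefMC !mulrA.
by case: i => [|[|i]] //=; rewrite mulrA.
Qed.

Lemma coef_jtp_poly n i : (jtp_poly n)`_i = qbinom p (2 * n) i * jtp_term n i.
Proof.
elim: n i => [|n IHn] i.
  rewrite /jtp_poly big_nil coef1 /jtp_term.
  by case: i => [|i] /=; rewrite ?mul0r // !expr0 !mulr1.
rewrite /jtp_poly big_nat_recr // -/(jtp_poly n) coefM_jtp_factor mulnSr addn2.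
case: i => [|[|i]]; rewrite !IHn.
- by rewrite !qbinom0 !mul1r !addr0 mulrC jtp_term_mulw mul1r.
- rewrite qbinomS1 qbinom0 mul1r addr0 -(jtp_termSS n 0) -mulrA.
  by rewrite [jtp_term n 1 * _]mulrC jtp_term_mulw expr1; ring.
have Tw : jtp_term n i.+2 * (w * p ^+ n) = p ^+ i.+2 * jtp_term n.+1 i.+2.
  by rewrite mulrC jtp_term_mulw.
rewrite qbinomSS -(jtp_termSS n i.+1).
(* Generalize p ^+ i.+2, which mulrA would otherwise unfold. *)
move: (p ^+ i.+2) Tw => P2 Tw.
rewrite -!mulrA Tw.
have [le_i2n | lt2ni] := leqP i (2 * n).
  by rewrite [jtp_term n i * _]mulrC jtp_term_mula //; ring.
by rewrite (@qbinom_small _ _ (2 * n) i) //; ring.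
Qed.

Theorem finite_jacobi_triple_product n :
  \prod_(0 <= k < n) ((1 + a * p ^+ k) * (1 + w * p ^+ k))
  = \sum_(i < (2 * n).+1) qbinom p (2 * n) i * jtp_term n i.
Proof.
have size_jtp : (size (jtp_poly n) <= (2 * n).+1)%N.
  by apply/leq_sizeP => j lt2nj; rewrite coef_jtp_poly qbinom_small ?mul0r.
transitivity (jtp_poly n).[1].
  by rewrite /jtp_poly horner_prod; apply: eq_bigr => k _; rewrite /jtp_factor !hornerE.
rewrite (horner_coef_wide 1 size_jtp); apply: eq_bigr => i _.
by rewrite expr1n mulr1 coef_jtp_poly.
Qed.

End FiniteJacobiTripleProduct.

Section CongruenceModXn.
Variable R : comNzRingType.
Implicit Types f g h : {poly R}.

Definition eqmodX N f g := forall i, (i < N)%N -> f`_i = g`_i.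

Lemma eqmodX_sym N f g : eqmodX N f g -> eqmodX N g f.
Proof. by move=> fg i ltiN; rewrite fg. Qed.

Lemma eqmodX_trans N f g h : eqmodX N f g -> eqmodX N g h -> eqmodX N f h.
Proof. by move=> fg gh i ltiN; rewrite fg // gh. Qed.

Lemma eqmodX_leq M N f g : (M <= N)%N -> eqmodX N f g -> eqmodX M f g.
Proof. by move=> leMN fg i ltiM; apply: fg; apply: leq_trans leMN. Qed.

Lemma eqmodXD N f g f' g' :
  eqmodX N f g -> eqmodX N f' g' -> eqmodX N (f + f') (g + g').
Proof. by move=> fg fg' i ltiN; rewrite !coefD fg // fg'. Qed.

Lemma eqmodXMl N h f g : eqmodX N f g -> eqmodX N (h * f) (h * g).
Proof.
move=> fg i ltiN; rewrite !coefM; apply: eq_bigr => j _; rewrite fg //.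
exact: leq_ltn_trans (leq_subr _ _) ltiN.
Qed.

Lemma eqmodXM N f g f' g' :
  eqmodX N f g -> eqmodX N f' g' -> eqmodX N (f * f') (g * g').
Proof.
move=> fg fg'; apply: (@eqmodX_trans _ _ (f * g')); first exact: eqmodXMl.
by rewrite ![_ * g']mulrC; apply: eqmodXMl.
Qed.

Lemma eqmodX_sum N (I : Type) (r : seq I) (P : pred I) (F G : I -> {poly R}) :
  (forall i, P i -> eqmodX N (F i) (G i)) ->
  eqmodX N (\sum_(i <- r | P i) F i) (\sum_(i <- r | P i) G i).
Proof. by move=> FG; apply: (big_ind2 (eqmodX N)) => // *; apply: eqmodXD. Qed.

Lemma eqmodX_mulXn N e f g :
  eqmodX N f g -> eqmodX (e + N) ('X^e * f) ('X^e * g).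
Proof. by move=> fg i lt_i; rewrite !coefXnM; case: ltnP => // lei; apply: fg; lia. Qed.

Lemma eqmodX_addXn N e f g : (N <= e)%N -> eqmodX N (f + g * 'X^e) f.
Proof.
move=> leNe i ltiN; rewrite coefD coefMXn.
by rewrite (leq_trans ltiN leNe) addr0.
Qed.

Lemma eqmodX_lregI N f g h :
  GRing.lreg f`_0 -> eqmodX N (f * g) (f * h) -> eqmodX N g h.
Proof.
move=> f0_reg fgh; suff gh0 i : (i < N)%N -> (g - h)`_i = 0.
  by move=> i ltiN; apply/eqP; rewrite -subr_eq0 -coefB gh0.
elim/ltn_ind: i => i IHi ltiN.
have := fgh i ltiN; move/eqP; rewrite -subr_eq0 -coefB -mulrBr coefMr.
rewrite big_ord_recr /= subnn big1 ?add0r => [|j _]; last first.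
  by rewrite IHi ?mulr0 //; apply: ltn_trans ltiN.
by rewrite mulrI_eq0 // => /eqP.
Qed.

End CongruenceModXn.

Section TruncatedQPochhammer.
Variables (R : comNzRingType) (b : nat).
Hypothesis b_gt0 : (0 < b)%N.
Notation q := ('X^b : {poly R}).

Lemma qpochXn_trunc r K :
  (r <= K)%N -> eqmodX (b * r.+1) (qpoch q K) (qpoch q r).
Proof.
move=> /subnK <-; elim: (K - r)%N => [|d IHd] //.
rewrite addSn qpochS -[qpoch q r]mulr1; apply: eqmodXM => //.
by rewrite -exprM -mulN1r; apply: eqmodX_addXn; rewrite leq_mul2l; lia.
Qed.

Lemma coef0_qpochXn r : (qpoch q r)`_0 = 1.
Proof.
have := @qpochXn_trunc 0 r (leq0n r) 0%N; rewrite muln1 => -> //.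
by rewrite /qpoch big_nil coef1.
Qed.

(* [m, k]_q (q;q)_m = (q;q)_m^2 / ((q;q)_k (q;q)_(m-k)), and the three
   Pochhammer symbols all agree with (q;q)_r modulo q^(r+1). *)
Lemma qbinomXn_qpoch_trunc m k : (k <= m)%N ->
  eqmodX (b * (minn k (m - k)).+1) (qbinom q m k * qpoch q m) 1.
Proof.
move=> lekm; set r := minn k (m - k).
have qpoch_k := @qpochXn_trunc r k (geq_minl _ _).
have qpoch_mk := @qpochXn_trunc r (m - k) (geq_minr _ _).
have qpoch_m : eqmodX (b * r.+1) (qpoch q m) (qpoch q r).
  by apply: qpochXn_trunc; rewrite /r; lia.
have qbinom_r : eqmodX (b * r.+1) (qbinom q m k * qpoch q r) 1.
  apply: (@eqmodX_lregI _ _ (qpoch q r)); first by rewrite coef0_qpochXn; exact: lreg1.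
  rewrite mulr1; apply: (eqmodX_trans _ qpoch_m).
  rewrite -(@qbinom_qpoch _ q m k lekm) -mulrA mulrCA; apply: eqmodXMl.
  by apply: eqmodXM; apply: eqmodX_sym.
by apply: eqmodX_trans qbinom_r; apply: eqmodXMl.
Qed.

Lemma jacobi_triple_product_trunc (a w : {poly R}) n N
    (c : nat -> {poly R}) (e : nat -> nat) :
  a * w = q ->
  (forall i, (i <= 2 * n)%N -> jtp_term a w q n i = c i * 'X^(e i)) ->
  (forall i, (i <= 2 * n)%N -> (N <= e i + b * (minn i (2 * n - i)).+1)%N) ->
  eqmodX N (\prod_(0 <= k < n) ((1 + a * q ^+ k) * (1 + w * q ^+ k)) * qpoch q (2 * n))
           (\sum_(i < (2 * n).+1) c i * 'X^(e i)).
Proof.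
move=> awX term_cX leN; rewrite finite_jacobi_triple_product // mulr_suml.
apply: eqmodX_sum => -[i /= lei2n] _; rewrite term_cX //.
set Q := qbinom _ _ i; set P := qpoch _ _.
have -> : Q * (c i * 'X^(e i)) * P = c i * ('X^(e i) * (Q * P)) by ring.
rewrite -[X in eqmodX _ _ X]mulr1 -mulrA; apply: eqmodXMl.
apply: eqmodX_leq (leN i lei2n) _; apply: eqmodX_mulXn.
exact: qbinomXn_qpoch_trunc.
Qed.

End TruncatedQPochhammer.

Definition dist (n i : nat) : nat := if (n <= i)%N then (i - n)%N else (n - i)%N.

Definition gauss_prod (n : nat) : {poly int} :=
  \prod_(0 <= k < n) ((1 + 'X^3 * 'X^4 ^+ k) * (1 + 'X * 'X^4 ^+ k)).

(* The exponents of jtp_term for p = X^4, a = X^3, w = X (tri_exp) and for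
   p = X^12, a = -X^8, w = -X^4 (pent_exp); the summation index i stands for
   j = i - n in [-n, n]. *)
Definition tri_exp (n i : nat) : nat :=
  if (n <= i)%N then (3 * (i - n) + 4 * 'C(i - n, 2))%N
  else ((n - i) + 4 * 'C(n - i, 2))%N.

Definition triangular_sum (n : nat) : {poly int} :=
  \sum_(i < (2 * n).+1) 'X^(tri_exp n i).

Definition pent_prod (n : nat) : {poly int} :=
  \prod_(0 <= k < n) ((1 + (- 'X^8) * 'X^12 ^+ k) * (1 + (- 'X^4) * 'X^12 ^+ k)).

Definition pent_exp (n i : nat) : nat :=
  if (n <= i)%N then (8 * (i - n) + 12 * 'C(i - n, 2))%N
  else (4 * (n - i) + 12 * 'C(n - i, 2))%N.

Definition pentagonal_sum (n : nat) : {poly int} :=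
  \sum_(i < (2 * n).+1) (-1) ^+ dist n i * 'X^(pent_exp n i).

Lemma gauss_prod_trunc n :
  eqmodX n.+1 (gauss_prod n * qpoch 'X^4 (2 * n)) (triangular_sum n).
Proof.
rewrite /triangular_sum -(eq_bigr _ (fun i _ => mul1r _)).
apply: (@jacobi_triple_product_trunc _ 4 isT 'X^3 'X n n.+1 (fun=> 1) (tri_exp n)).
- by rewrite -exprSr.
- by move=> i _; rewrite /jtp_term /tri_exp; case: ifP => _; rewrite mul1r -!exprM -exprD.
by move=> i lei2n; rewrite /tri_exp; case: (leqP n i) => hni; lia.
Qed.

Lemma pent_prod_trunc n :
  eqmodX n.+1 (pent_prod n * qpoch 'X^12 (2 * n)) (pentagonal_sum n).
Proof.
apply: (@jacobi_triple_product_trunc _ 12 isT (- 'X^8) (- 'X^4) n n.+1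
          (fun i => (-1) ^+ dist n i) (pent_exp n)).
- by rewrite mulrNN -exprD.
- move=> i _; rewrite /jtp_term /pent_exp /dist.
  by case: ifP => _; rewrite [in LHS]exprNn -mulrA -!exprM -exprD.
by move=> i lei2n; rewrite /pent_exp; case: (leqP n i) => hni; lia.
Qed.

Lemma pent_prod_qpoch n : pent_prod n * qpoch 'X^12 n = qpoch 'X^4 (3 * n).
Proof.
elim: n => [|n IHn]; first by rewrite /pent_prod /qpoch !big_nil mulr1.
rewrite /pent_prod big_nat_recr // -/(pent_prod n).
rewrite (_ : 3 * n.+1 = (3 * n).+3)%N; last by lia.
rewrite !qpochS -IHn !mulNr -!exprM -!exprD.
rewrite (_ : 4 + 12 * n = 4 * (3 * n).+1)%N; last by lia.
rewrite (_ : 8 + 12 * n = 4 * (3 * n).+2)%N; last by lia.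
rewrite (_ : 12 * n.+1 = 4 * (3 * n).+3)%N; last by lia.
by rewrite -!mulrA; congr (_ * _); ring.
Qed.

Lemma euler_pentagonal_trunc n :
  eqmodX n.+1 (pentagonal_sum n) (qpoch 'X^4 (2 * n)).
Proof.
apply: (eqmodX_trans (eqmodX_sym (@pent_prod_trunc n))).
apply: (@eqmodX_trans _ _ _ (pent_prod n * qpoch 'X^12 n)).
  apply: eqmodXMl; apply: (@eqmodX_leq _ _ (12 * n.+1)); first lia.
  by apply: qpochXn_trunc; lia.
rewrite pent_prod_qpoch; apply: (@eqmodX_leq _ _ (4 * (2 * n).+1)); first lia.
by apply: qpochXn_trunc; lia.
Qed.

Definition odd_parts_gen (K : nat) : {poly int} :=
  \prod_(0 <= k < K) (1 + 'X^((2 * k).+1)).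

Lemma odd_parts_genE m :
  \prod_(0 <= i < m) ((odd i)%:R *: 'X^i + 1 : {poly int}) = odd_parts_gen m./2.
Proof.
elim: m => [|m IHm]; first by rewrite /odd_parts_gen !big_nil.
rewrite big_nat_recr // IHm /odd_parts_gen /= uphalf_half.
have [odd_m | even_m] := boolP (odd m); last by rewrite scale0r add0r mulr1.
rewrite scale1r add1n big_nat_recr //= addrC; congr (_ * (_ + 'X^_)).
by rewrite -[LHS]odd_double_half odd_m mul2n.
Qed.

Lemma prod_odd_indicator t (A : {set 'I_t.+1}) :
  \prod_(i in A) ((odd i)%:R : int) = ([forall i in A, odd i] : nat)%:R.
Proof.
case: (boolP [forall i in A, odd i]) => [/forall_inP oddA | /forall_inPn[i iA eveni]].
  by rewrite big1 // => i /oddA ->.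
by rewrite (bigD1 i) //= (negbTE eveni) mul0r.
Qed.

Lemma coef_odd_parts_gen t : (odd_parts_gen t.+1./2)`_t = (qq t)%:R.
Proof.
rewrite -odd_parts_genE big_mkord bigA_distr.
under eq_bigr => A _ do
  rewrite -big_mkcond scaler_prod prodrXr prod_odd_indicator.
rewrite coef_sumMXn big_mkcondr /qq -sumr_const [RHS]big_mkcond.
apply: eq_big => [A //|A _]; rewrite inE andbC.
by case: (_ == t); case: [forall i in A, _].
Qed.

Lemma gauss_prod_odd n : gauss_prod n = odd_parts_gen (2 * n).
Proof.
elim: n => [|n IHn]; first by rewrite /gauss_prod /odd_parts_gen !big_nil.
rewrite /gauss_prod big_nat_recr // -/(gauss_prod n) IHn /odd_parts_gen mulnSr addn2.
rewrite !big_nat_recr //= -mulrA -!exprM -!exprD -exprS.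
rewrite (_ : (2 * (2 * n)).+1 = (4 * n).+1)%N; last by lia.
rewrite (_ : (2 * (2 * n).+1).+1 = 3 + 4 * n)%N; last by lia.
by congr (_ * _); exact: mulrC.
Qed.

Lemma odd_parts_gen_trunc K K' :
  (K <= K')%N -> eqmodX (2 * K).+1 (odd_parts_gen K') (odd_parts_gen K).
Proof.
move=> /subnK <-; elim: (K' - K)%N => [|d IHd] //.
rewrite addSn /odd_parts_gen big_nat_recr // -/(odd_parts_gen _).
rewrite -[odd_parts_gen K]mulr1; apply: eqmodXM => //.
by rewrite -[X in 1 + X]mul1r; apply: eqmodX_addXn; lia.
Qed.

Lemma coef_gauss_prod n t : (t <= n)%N -> (gauss_prod n)`_t = (qq t)%:R.
Proof.
move=> letn; rewrite -coef_odd_parts_gen gauss_prod_odd.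
apply: (@odd_parts_gen_trunc t.+1./2 (2 * n)); first lia.
by rewrite -{2}(odd_double_half t.+1) /=; case: odd => /=; lia.
Qed.

Lemma gauss_pentagonal_eqmodX n :
  eqmodX n.+1 (gauss_prod n * pentagonal_sum n) (triangular_sum n).
Proof.
apply: (eqmodX_trans _ (@gauss_prod_trunc n)).
exact: eqmodXMl (@euler_pentagonal_trunc n).
Qed.

Lemma qqz_subn n e :
  qqz (n%:Z - e%:Z) = if (e <= n)%N then (qq (n - e))%:Z else 0.
Proof.
case: leqP => [len | ltne]; first by rewrite subzn.
have subn_gt0 : (0 < e - n)%N by rewrite subn_gt0.
by rewrite -opprB subzn ?(ltnW ltne) // -(prednK subn_gt0) -NegzE.
Qed.

Lemma coef_gauss_pentagonal n : (gauss_prod n * pentagonal_sum n)`_n =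
  \sum_(i < (2 * n).+1) (-1) ^+ dist n i * qqz (n%:Z - (pent_exp n i)%:Z).
Proof.
have signC k : (-1 : {poly int}) ^+ k = ((-1) ^+ k)%:P.
  by rewrite rmorphXn /= polyCN polyC1.
rewrite /pentagonal_sum mulr_sumr coef_sum; apply: eq_bigr => i _.
rewrite mulrCA signC coefCM coefMXn qqz_subn.
by case: (leqP (pent_exp n i) n) => // _; rewrite coef_gauss_prod ?leq_subr ?natz.
Qed.

Lemma qq_pentagonal_sumE n :
  (qq n)%:Z + \sum_(1 <= j < n.+1)
       (-1) ^+ j * (qqz (n%:Z - (2 * j * (3 * j - 1))%N%:Z)
                    + qqz (n%:Z - (2 * j * (3 * j + 1))%N%:Z))
  = \sum_(i < (2 * n).+1) (-1) ^+ dist n i * qqz (n%:Z - (pent_exp n i)%:Z).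
Proof.
rewrite (@sumr_center _ n (fun i => (-1) ^+ dist n i * qqz (n%:Z - (pent_exp n i)%:Z))).
rewrite /dist /pent_exp leqnn subnn expr0 mul1r subr0; congr (_ + _).
rewrite !big_nat; apply: eq_bigr => j /andP[j_gt0 lejn].
rewrite leq_addr addKn (_ : n <= n - j = false)%N; last by lia.
rewrite (_ : n - (n - j) = j)%N; last by lia.
case: j j_gt0 {lejn} => // k _; have := bin2_mul2 k.+1; rewrite subn1 /=.
move: ('C(k.+1, 2)) => C CE.
rewrite (_ : 8 * k.+1 + 12 * C = 2 * k.+1 * (3 * k.+1 + 1))%N; last by nia.
rewrite (_ : 4 * k.+1 + 12 * C = 2 * k.+1 * (3 * k.+1 - 1))%N; last by nia.
by rewrite mulrDr addrC.
Qed.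

Definition tri_index (n i : nat) : nat :=
  if (n <= i)%N then (2 * (i - n))%N else (2 * (n - i)).-1.

Lemma tri_exp_index n i : tri_exp n i = 'C((tri_index n i).+1, 2).
Proof.
rewrite /tri_exp /tri_index; case: leqP => [_ | lt_in]; first by rewrite bin2_odd_double.
by rewrite prednK ?bin2_even_double //; lia.
Qed.

Lemma tri_index_inj n : injective (tri_index n).
Proof.
by move=> i i'; rewrite /tri_index -!subn1; case: (leqP n i); case: (leqP n i'); lia.
Qed.

Lemma tri_index_onto n k :
  (k <= 2 * n)%N -> exists i : 'I_(2 * n).+1, tri_index n i = k.
Proof.
move=> lek2n; have kE := odd_double_half k.
have lt_i : ((if odd k then n - k./2.+1 else n + k./2) < (2 * n).+1)%N.
  by case: (odd k) kE => /= kE; lia.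
exists (Ordinal lt_i); rewrite /tri_index /= -subn1.
by case: (odd k) kE => /= kE; case: leqP; lia.
Qed.

Lemma triangularE n : triangular n <-> exists k, n = 'C(k.+1, 2).
Proof.
have tri k : 'C(k.+1, 2) = ((k * k.+1) %/ 2)%N by rewrite bin2 /= -divn2 mulnC.
by split=> -[k nE]; exists k; rewrite nE tri.
Qed.

Lemma coef_triangular_sum n :
  (triangular n -> (triangular_sum n)`_n = 1) /\
  (~ triangular n -> (triangular_sum n)`_n = 0).
Proof.
rewrite /triangular_sum coef_sum.
under eq_bigr => i _ do rewrite coefXn tri_exp_index.
split=> [/triangularE[k nE] | ntri]; last first.
  rewrite big1 // => i _; case: (boolP (n == _)) => [nE | //].
  by case: ntri; apply/triangularE; exists (tri_index n i); apply/eqP.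
have lek2n : (k <= 2 * n)%N.
  by have := bin2_mul2 k.+1; rewrite -nE subn1 /=; nia.
have [i0 i0k] := tri_index_onto lek2n.
rewrite (bigD1 i0) //= i0k -nE eqxx big1 ?addr0 // => i ne_i_i0.
case: (boolP (n == _)) => [/eqP | //]; rewrite [X in X = _]nE -i0k.
by move/bin2S_inj/tri_index_inj/val_inj => ii0; rewrite ii0 eqxx in ne_i_i0.
Qed.

Theorem theorem5 (n : nat) : (1 <= n)%N ->
  let S : int :=
    (qq n)%:Z + \sum_(1 <= j < n.+1)
       (-1) ^+ j * (qqz (n%:Z - (2 * j * (3 * j - 1))%N%:Z)
                    + qqz (n%:Z - (2 * j * (3 * j + 1))%N%:Z)) in
  (triangular n -> S = 1) /\ (~ triangular n -> S = 0).
Proof.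
move=> _ S.
have -> : S = (gauss_prod n * pentagonal_sum n)`_n.
  by rewrite /S qq_pentagonal_sumE coef_gauss_pentagonal.
rewrite (@gauss_pentagonal_eqmodX n n) //.
exact: coef_triangular_sum.
Qed.
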